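(* Let $\mathbb{C}$ be a locally small category and $\mathbb{C}_{\mathit{fin}}$ a full subcategory satisfying (C1)–(C5) below. Let $F\in\mathrm{Ob}(\mathbb{C})$ be locally finite and let $U:\mathbb{C}^*\to\mathbb{C}$ be a reasonable precompact expansion with unique restrictions which separates points. Then (a) $\mathcal{S}_F=\{N(e,\mathcal{A}):U(\mathcal{A})\in\mathrm{Ob}(\mathbb{C}_{\mathit{fin}}),\ e\in\hom(U(\mathcal{A}),F)\}$ is a base consisting of clopen sets of a topology $\sigma_F$ on $U^{-1}(F)$; and (b) $U^{-1}(F)$ with the topology $\sigma_F$ is a Hausdorff space.
   Context: Write $A\to B$ if $\hom(A,B)\ne\varnothing$. Conditions: (C1) all morphisms of $\mathbb{C}$ are monomorphisms; (C2) $\mathrm{Ob}(\mathbb{C}_{\mathit{fin}})$ is a set; (C3) $\hom(A,B)$ is finite for $A,B\in\mathrm{Ob}(\mathbb{C}_{\mathit{fin}})$; (C4) for every $F\in\mathrm{Ob}(\mathbb{C})$ there is $A\in\mathrm{Ob}(\mathbb{C}_{\mathit{fin}})$ with $A\to F$; (C5) for every $B\in\mathrm{Ob}(\mathbb{C}_{\mathit{fin}})$ the set $\{A\in\mathrm{Ob}(\mathbb{C}_{\mathit{fin}}):A\to B\}$ is finite. $F$ is locally finite if for all $A,B\in\mathrm{Ob}(\mathbb{C}_{\mathit{fin}})$, $e\in\hom(A,F)$, $f\in\hom(B,F)$ there exist $D\in\mathrm{Ob}(\mathbb{C}_{\mathit{fin}})$, $r\in\hom(D,F)$, $p\in\hom(A,D)$,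 $q\in\hom(B,D)$ with $r\cdot p=e$, $r\cdot q=f$, such that for every $H\in\mathrm{Ob}(\mathbb{C})$, $r'\in\hom(H,F)$, $p'\in\hom(A,H)$, $q'\in\hom(B,H)$ with $r'\cdot p'=e$, $r'\cdot q'=f$ there is $s\in\hom(D,H)$ with $r'\cdot s=r$, $s\cdot p=p'$, $s\cdot q=q'$. An expansion of $\mathbb{C}$ is a locally small category $\mathbb{C}^*$ with a functor $U:\mathbb{C}^*\to\mathbb{C}$ surjective on objects and injective on hom-sets; we regard $\hom_{\mathbb{C}^*}(\mathcal{A},\mathcal{B})\subseteq\hom_{\mathbb{C}}(U\mathcal{A},U\mathcal{B})$, and $U^{-1}(A)=\{\mathcal{A}:U(\mathcal{A})=A\}$. $U$ is reasonable if for every $e\in\hom(A,B)$ and $\mathcal{A}\in U^{-1}(A)$ there is $\mathcal{B}\in U^{-1}(B)$ with $e\in\hom(\mathcal{A},\mathcal{B})$; it has unique restrictions if for every $\mathcal{B}\in\mathrm{Ob}(\mathbb{C}^* )$ and $e\in\hom(A,U(\mathcal{B}))$ there is exactly one $\mathcal{A}\in U^{-1}(A)$ with $e\in\hom(\mathcal{A},\mathcal{B})$, denoted $\mathcal{B}|_e$; it is precompact if $U^{-1}(A)$ is a set for every $A\in\mathrm{Ob}(\mathbb{C})$ and finite for $A\in\mathrm{Ob}(\mathbb{C}_{\mathit{fin}})$; it separates points if for every $F\in\mathrm{Ob}(\mathbb{C})$ and all distinct $\mathcal{F}_1,\mathcal{F}_2\in U^{-1}(F)$ there are $A\in\mathrm{Ob}(\mathbb{C}_{\mathit{fin}})$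 and $e\in\hom(A,F)$ with $\mathcal{F}_1|_e\ne\mathcal{F}_2|_e$. For $e\in\hom(A,F)$ and $\mathcal{A}\in U^{-1}(A)$, $N(e,\mathcal{A})=\{\mathcal{F}\in U^{-1}(F):e\in\hom(\mathcal{A},\mathcal{F})\}$. *)

From Stdlib Require Import List.
Set Implicit Arguments.
Unset Strict Implicit.

Record Category := {
  Ob :> Type;
  Hom : Ob -> Ob -> Type;
  idm : forall A, Hom A A;
  comp : forall A B C, Hom B C -> Hom A B -> Hom A C;   (* comp g f = g . f *)
  comp_assoc : forall A B C D (h : Hom C D) (g : Hom B C) (f : Hom A B),
      comp h (comp g f) = comp (comp h g) f;
  comp_id_l : forall A B (f : Hom A B), comp (idm B) f = f;
  comp_id_r : forall A B (f : Hom A B), comp f (idm A) = f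
}.
Arguments Hom {c} A B.
Arguments idm {c} A.
Arguments comp {c A B C} _ _.

Record Functor (D C : Category) := {
  Fobj :> Ob D -> Ob C;
  Fmor : forall A B : Ob D, Hom A B -> Hom (Fobj A) (Fobj B);
  Fmor_id : forall A, Fmor (idm A) = idm (Fobj A);
  Fmor_comp : forall A B E (g : Hom B E) (f : Hom A B),
      Fmor (comp g f) = comp (Fmor g) (Fmor f)
}.
Arguments Fmor {D C} f {A B} _ : rename.

Definition arr (C : Category) (A B : Ob C) : Prop := inhabited (Hom A B).

Definition castHom (C : Category) (A A' B B' : Ob C) (p : A = A') (q : B = B')
  (f : Hom A B) : Hom A' B' :=
  match p in _ = X, q in _ = Y return Hom X Y with eq_refl, eq_refl => f end.

(* Conditions (C1)-(C5) on a full subcategory given by the object predicate fin *)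
Definition C1 (C : Category) : Prop :=
  forall (A B E : Ob C) (f : Hom A B) (g h : Hom E A), comp f g = comp f h -> g = h.
(* (C2): Ob(C_fin) is a set -- automatic, objects of C_fin form the type {A | fin A}. *)
Definition C3 (C : Category) (fin : Ob C -> Prop) : Prop :=
  forall A B : Ob C, fin A -> fin B ->
    exists l : list (Hom A B), forall f, In f l.
Definition C4 (C : Category) (fin : Ob C -> Prop) : Prop :=
  forall F : Ob C, exists A, fin A /\ arr A F.
Definition C5 (C : Category) (fin : Ob C -> Prop) : Prop :=
  forall B : Ob C, fin B ->
    exists l : list (Ob C), forall A, fin A -> arr A B -> In A l.

Definition locally_finite (C : Category) (fin : Ob C -> Prop) (F : Ob C) : Prop :=
  forall (A B : Ob C) (e : Hom A F) (f : Hom B F), fin A -> fin B ->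
    exists (D : Ob C) (r : Hom D F) (p : Hom A D) (q : Hom B D),
      fin D /\ comp r p = e /\ comp r q = f /\
      forall (H : Ob C) (r' : Hom H F) (p' : Hom A H) (q' : Hom B H),
        comp r' p' = e -> comp r' q' = f ->
        exists s : Hom D H, comp r' s = r /\ comp s p = p' /\ comp s q = q'.

Definition expansion (Cs C : Category) (U : Functor Cs C) : Prop :=
  (forall A : Ob C, exists As : Ob Cs, U As = A) /\
  (forall (As Bs : Ob Cs) (g h : Hom As Bs), Fmor U g = Fmor U h -> g = h).

(* e \in hom(As, Bs), for e : hom(A,B), U As = A, U Bs = B *)
Definition mem_hom (Cs C : Category) (U : Functor Cs C) (A B : Ob C) (e : Hom A B)
  (As Bs : Ob Cs) : Prop :=
  exists (p : U As = A) (q : U Bs = B) (g : Hom As Bs), castHom p q (Fmor U g) = e.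

Definition reasonable (Cs C : Category) (U : Functor Cs C) : Prop :=
  forall (A B : Ob C) (e : Hom A B) (As : Ob Cs), U As = A ->
    exists Bs : Ob Cs, mem_hom U e As Bs.

Definition unique_restrictions (Cs C : Category) (U : Functor Cs C) : Prop :=
  forall (Bs : Ob Cs) (A : Ob C) (e : Hom A (U Bs)),
    exists! As : Ob Cs, mem_hom U e As Bs.

(* U^{-1}(A) is always a set (a subtype of Ob Cs); finiteness for A in C_fin *)
Definition precompact (Cs C : Category) (U : Functor Cs C) (fin : Ob C -> Prop) : Prop :=
  forall A : Ob C, fin A -> exists l : list (Ob Cs), forall As, U As = A -> In As l.

(* using unique restrictions, F1|_e and F2|_e are the unique As with e in hom(As, Fi) *)
Definition separates_points (Cs C : Category) (U : Functor Cs C) (fin : Ob C -> Prop) : Prop :=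
  forall (F : Ob C) (F1 F2 : Ob Cs), U F1 = F -> U F2 = F -> F1 <> F2 ->
    exists (A : Ob C) (e : Hom A F) (A1 A2 : Ob Cs),
      fin A /\ mem_hom U e A1 F1 /\ mem_hom U e A2 F2 /\ A1 <> A2.

Definition fibre (Cs C : Category) (U : Functor Cs C) (F : Ob C) : Type :=
  { Fs : Ob Cs | U Fs = F }.

Definition Nset (Cs C : Category) (U : Functor Cs C) (F A : Ob C) (e : Hom A F)
  (As : Ob Cs) : fibre U F -> Prop :=
  fun x => mem_hom U e As (proj1_sig x).

Definition S_F (Cs C : Category) (U : Functor Cs C) (fin : Ob C -> Prop) (F : Ob C)
  : (fibre U F -> Prop) -> Prop :=
  fun S => exists (As : Ob Cs) (e : Hom (U As) F), fin (U As) /\ S = Nset e As.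

Definition is_topology (X : Type) (tau : (X -> Prop) -> Prop) : Prop :=
  tau (fun _ => False) /\ tau (fun _ => True) /\
  (forall O1 O2, tau O1 -> tau O2 -> tau (fun x => O1 x /\ O2 x)) /\
  (forall fam : (X -> Prop) -> Prop, (forall O, fam O -> tau O) ->
     tau (fun x => exists O, fam O /\ O x)).

Definition is_base_of (X : Type) (S tau : (X -> Prop) -> Prop) : Prop :=
  (forall B, S B -> tau B) /\
  (forall O, tau O -> forall x, O x -> exists B, S B /\ B x /\ forall y, B y -> O y).

Definition clopen (X : Type) (tau : (X -> Prop) -> Prop) (B : X -> Prop) : Prop :=
  tau B /\ tau (fun x => ~ B x).

Definition hausdorff (X : Type) (tau : (X -> Prop) -> Prop) : Prop :=
  forall x y : X, x <> y -> exists O1 O2, tau O1 /\ tau O2 /\ O1 x /\ O2 y /\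
    forall z, ~ (O1 z /\ O2 z).

Arguments S_F {Cs C} U fin F _.
Arguments Nset {Cs C} U {F A} e As _.

(** The topology is the one generated by [S_F].  Every point of the fibre has
    exactly one restriction along each [e : A -> F], so for a fixed [e] the
    sets [N(e, A)] partition the fibre; hence each of them is clopen, and
    separation of points yields disjoint basic neighbourhoods.  Two basic sets
    [N(e1, A1)] and [N(e2, A2)] containing a point meet in a basic set: local
    finiteness factors [e1] and [e2] through a common [r : D -> F] with [D]
    finite, and [N(r, D)] around the point lies in both. *)
From Stdlib Require Import Eqdep.
Set Implicit Arguments.
Unset Strict Implicit.

Section GeneratedTopology.

Variables (X : Type) (S : (X -> Prop) -> Prop).

Definition generated_topology (O : X -> Prop) : Prop :=
  forall x, O x -> exists B, S B /\ B x /\ forall y, B y -> O y.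

Lemma generated_topology_base : is_base_of S generated_topology.
Proof.
  split; [|intros O HO; exact HO].
  intros B HB x Bx. exists B. auto.
Qed.

Lemma generated_topology_is_topology :
  (forall x, exists B, S B /\ B x) ->
  (forall B1 B2 x, S B1 -> S B2 -> B1 x -> B2 x ->
     exists B, S B /\ B x /\ forall y, B y -> B1 y /\ B2 y) ->
  is_topology generated_topology.
Proof.
  intros cover meet. split; [|split; [|split]].
  - intros x [].
  - intros x _. destruct (cover x) as [B [HB Bx]]. exists B. auto.
  - intros O1 O2 H1 H2 x [O1x O2x].
    destruct (H1 x O1x) as [B1 [HB1 [B1x B1O1]]].
    destruct (H2 x O2x) as [B2 [HB2 [B2x B2O2]]].
    destruct (meet B1 B2 x HB1 HB2 B1x B2x) as [B [HB [Bx BB]]].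
    exists B. split; [exact HB | split; [exact Bx|]].
    intros y By. destruct (BB y By). auto.
  - intros fam Hfam x [O [HO Ox]].
    destruct (Hfam O HO x Ox) as [B [HB [Bx BO]]].
    exists B. split; [exact HB | split; [exact Bx|]].
    intros y By. exists O. auto.
Qed.

Lemma generated_topology_clopen (B : X -> Prop) :
  S B ->
  (forall x, ~ B x -> exists B', S B' /\ B' x /\ forall y, B' y -> ~ B y) ->
  clopen generated_topology B.
Proof.
  intros HB complement. split; [|exact complement].
  apply generated_topology_base, HB.
Qed.

Lemma generated_topology_hausdorff :
  (forall x y, x <> y -> exists B1 B2, S B1 /\ S B2 /\ B1 x /\ B2 y /\
     forall z, ~ (B1 z /\ B2 z)) ->
  hausdorff generated_topology.
Proof.
  intros separate x y xy.
  destruct (separate x y xy) as [B1 [B2 [HB1 [HB2 [B1x [B2y disj]]]]]].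
  exists B1, B2.
  split; [apply generated_topology_base, HB1|].
  split; [apply generated_topology_base, HB2|].
  auto.
Qed.

End GeneratedTopology.

Section Restrictions.

Variables (Cs C : Category) (U : Functor Cs C).

Lemma mem_hom_dom (A B : Ob C) (e : Hom A B) As Bs :
  mem_hom U e As Bs -> U As = A.
Proof. intros [p _]. exact p. Qed.

Lemma mem_hom_comp (A B D : Ob C) (f : Hom A B) (g : Hom B D) As Bs Ds :
  mem_hom U f As Bs -> mem_hom U g Bs Ds -> mem_hom U (comp g f) As Ds.
Proof.
  intros [p [q [f' Hf]]] [p' [q' [g' Hg]]].
  subst A B D. rewrite (UIP_refl _ _ p') in Hg. simpl in Hf, Hg. subst f g.
  exists eq_refl, eq_refl, (comp g' f'). apply Fmor_comp.
Qed.

Hypothesis UR : unique_restrictions U.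

Lemma restriction_exists (A B : Ob C) (e : Hom A B) Bs :
  U Bs = B -> exists As, mem_hom U e As Bs.
Proof.
  intros HB. subst B. destruct (@UR Bs A e) as [As [HAs _]]. eauto.
Qed.

Lemma restriction_unique (A B : Ob C) (e : Hom A B) A1 A2 Bs :
  mem_hom U e A1 Bs -> mem_hom U e A2 Bs -> A1 = A2.
Proof.
  intros H1 H2. destruct H1 as [p [q H1']].
  subst B. destruct (@UR Bs A e) as [As [_ uniq]].
  rewrite <- (uniq A1), <- (uniq A2); auto.
  exists p, eq_refl. exact H1'.
Qed.

End Restrictions.

Section BasicSets.

Variables (Cs C : Category) (U : Functor Cs C) (fin : Ob C -> Prop) (F : Ob C).
Hypothesis UR : unique_restrictions U.

Lemma fibre_eq (x y : fibre U F) : proj1_sig x = proj1_sig y -> x = y.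
Proof. apply eq_sig_hprop. intros Fs p q. apply UIP. Qed.

Lemma S_F_Nset (A : Ob C) (e : Hom A F) As :
  fin A -> U As = A -> S_F U fin F (Nset U e As).
Proof. intros HA HAs. subst A. exists As, e. auto. Qed.

Lemma Nset_restriction (x : fibre U F) (A : Ob C) (e : Hom A F) :
  exists As, U As = A /\ Nset U e As x.
Proof.
  destruct (restriction_exists UR e (proj2_sig x)) as [As HAs].
  exists As. split; [exact (mem_hom_dom HAs) | exact HAs].
Qed.

Lemma S_F_cover : C4 fin -> forall x, exists B, S_F U fin F B /\ B x.
Proof.
  intros c4 x. destruct (c4 F) as [A [HA [e]]].
  destruct (Nset_restriction x e) as [As [HAs Ax]].
  exists (Nset U e As). split; [apply S_F_Nset|]; assumption.
Qed.

Lemma S_F_meet : locally_finite fin F ->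
  forall B1 B2 x, S_F U fin F B1 -> S_F U fin F B2 -> B1 x -> B2 x ->
    exists B, S_F U fin F B /\ B x /\ forall y, B y -> B1 y /\ B2 y.
Proof.
  intros LF B1 B2 x [A1 [e1 [fin1 ->]]] [A2 [e2 [fin2 ->]]] A1x A2x.
  destruct (LF _ _ e1 e2 fin1 fin2) as [D [r [p [q [finD [Hp [Hq _]]]]]]].
  destruct (Nset_restriction x r) as [Ds [HDs Dx]].
  destruct (restriction_exists UR p HDs) as [P1 HP1].
  destruct (restriction_exists UR q HDs) as [P2 HP2].
  assert (D_P1 : forall y, Nset U r Ds y -> Nset U e1 P1 y).
  { intros y Dy. rewrite <- Hp. exact (mem_hom_comp HP1 Dy). }
  assert (D_P2 : forall y, Nset U r Ds y -> Nset U e2 P2 y).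
  { intros y Dy. rewrite <- Hq. exact (mem_hom_comp HP2 Dy). }
  assert (P1_A1 : P1 = A1) by exact (restriction_unique UR (D_P1 x Dx) A1x).
  assert (P2_A2 : P2 = A2) by exact (restriction_unique UR (D_P2 x Dx) A2x).
  subst P1 P2.
  exists (Nset U r Ds). split; [apply S_F_Nset; assumption|]. auto.
Qed.

Lemma S_F_complement B : S_F U fin F B ->
  forall x, ~ B x -> exists B', S_F U fin F B' /\ B' x /\ forall y, B' y -> ~ B y.
Proof.
  intros [As [e [finA ->]]] x Ax.
  destruct (Nset_restriction x e) as [As' [HAs' A'x]].
  exists (Nset U e As'). split; [apply S_F_Nset; assumption|]. split; [exact A'x|].
  intros y A'y Ay. apply Ax.
  rewrite <- (restriction_unique UR Ay A'y) in A'x. exact A'x.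
Qed.

Lemma S_F_separates : separates_points U fin ->
  forall x y : fibre U F, x <> y ->
    exists B1 B2, S_F U fin F B1 /\ S_F U fin F B2 /\ B1 x /\ B2 y /\
      forall z, ~ (B1 z /\ B2 z).
Proof.
  intros SP x y xy.
  assert (xy' : proj1_sig x <> proj1_sig y) by (intro E; apply xy, fibre_eq, E).
  destruct (SP F _ _ (proj2_sig x) (proj2_sig y) xy')
    as [A [e [A1 [A2 [finA [A1x [A2y A12]]]]]]].
  exists (Nset U e A1), (Nset U e A2).
  split; [apply S_F_Nset; [exact finA | exact (mem_hom_dom A1x)]|].
  split; [apply S_F_Nset; [exact finA | exact (mem_hom_dom A2y)]|].
  split; [exact A1x|]. split; [exact A2y|].
  intros z [A1z A2z]. exact (A12 (restriction_unique UR A1z A2z)).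
Qed.

End BasicSets.

Theorem proposition5p7 (C : Category) (fin : Ob C -> Prop)
  (Cs : Category) (U : Functor Cs C) (F : Ob C) :
  C1 C -> C3 fin -> C4 fin -> C5 fin ->
  locally_finite fin F ->
  expansion U -> reasonable U -> precompact U fin -> unique_restrictions U ->
  separates_points U fin ->
  exists tau : (fibre U F -> Prop) -> Prop,
    is_topology tau /\ is_base_of (S_F U fin F) tau /\
    (forall B, S_F U fin F B -> clopen tau B) /\
    hausdorff tau.
Proof.
  intros _ _ c4 _ LF _ _ _ UR SP.
  exists (generated_topology (S_F U fin F)).
  split; [|split; [|split]].
  - apply generated_topology_is_topology.
    + exact (S_F_cover UR c4).
    + exact (S_F_meet UR LF).
  - apply generated_topology_base.
  - intros B HB. apply generated_topology_clopen; [exact HB|].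
    exact (S_F_complement UR HB).
  - apply generated_topology_hausdorff. exact (S_F_separates UR SP).
Qed.
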